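(* Let $G=([k],E)$ be realisable in $\mathbb{R}^d$ with profile $\boldsymbol\lambda$, where $\lambda_i\ge 2$ for every $i\in[k]$. If the girth of $G$ is $2\ell+1$ with $\ell>1$, then $\zeta(G,\boldsymbol\lambda)\le\frac d2$. If the girth of $G$ is $2\ell$ with $\ell>2$, then $\zeta(G,\boldsymbol\lambda)\le\frac{\ell}{2\ell-1}d$.
   Context: The girth of a graph is the length of its shortest cycle. A sphere of dimension $\ell$ in $\mathbb{R}^d$ ($0\le\ell\le d-1$) is the set of points of an $(\ell+1)$-dimensional affine subspace at a fixed positive distance from a fixed point of that subspace. For finite sets $P_1,\dots,P_k\subset\mathbb{R}^d$, the profile of $(P_1,\dots,P_k)$ is $\boldsymbol\lambda=(\lambda_1,\dots,\lambda_k)$, where $\lambda_i=0$ if $|P_i|\le 3$, and otherwise $\lambda_i$ is the smallest $\ell$ such that some sphere of dimension $\ell$ contains $P_i$, with $\lambda_i=d$ if no sphere contains $P_i$. A graph $G=([k],E)$ is compatible with $(P_1,\dots,P_k)$ if $\|p-p'\|=1$ for every edge $\{i,j\}\in E$ and all $p\in P_i$, $p'\in P_j$. $G$ is realisable in $\mathbb{R}^d$ with profile $\boldsymbol\lambda$ if there exist finite sets $P_1,\dots,P_k\subset\mathbb{R}^d$ with profile $\boldsymbol\lambda$ that are compatible with $G$. For $i\in[k]$ let $V_i=\{j\in[k]\setminus\{i\}:\{i,j\}\notin E\}$. $\zeta(G,\boldsymbol\lambda)$ denotes the optimum value of the linear program: minimize $\sum_{i\in[k]}\lambda_ix_i$ over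 $\mathbf{x}\in\mathbb{R}^k$ subject to $x_i\ge 0$ and $\lambda_ix_i+\sum_{j\in V_i}x_j\ge 1$ for all $i\in[k]$. *)

From HB Require Import structures.
From mathcomp Require Import all_boot all_order all_algebra.
From mathcomp Require Import boolp classical_sets reals.
Set Implicit Arguments. Unset Strict Implicit. Unset Printing Implicit Defensive.
Import Order.TTheory GRing.Theory Num.Theory.
Local Open Scope ring_scope.

Section Defs.
Variable R : realType.

Definition enorm (d : nat) (v : 'rV[R]_d) : R :=
  Num.sqrt (\sum_(i < d) v 0 i ^+ 2).

(* A sphere of dimension l in R^d: the points of the (l+1)-dimensional affine
   subspace c + rowspace(U) (rank U = l+1) at distance r > 0 from c.
   [in_sphere_dim P l] : some sphere of dimension l contains all points of P. *)
Definition in_sphere_dim (d : nat) (P : seq 'rV[R]_d) (l : nat) : Prop :=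
  exists (c : 'rV[R]_d) (U : 'M[R]_d) (r : R),
    [/\ 0 < r, \rank U = l.+1 &
        forall p, p \in P -> (p - c <= U)%MS /\ enorm (p - c) = r].

Definition is_profile (d k : nat) (P : 'I_k -> seq 'rV[R]_d) (lam : 'I_k -> nat)
  : Prop :=
  forall i : 'I_k,
    if (size (P i) <= 3)%N then lam i = 0%N
    else [/\ (lam i <= d)%N,
             (lam i < d)%N -> in_sphere_dim (P i) (lam i) &
             forall l, (l < lam i)%N -> ~ in_sphere_dim (P i) l].

Definition compatible (d k : nat) (E : rel 'I_k) (P : 'I_k -> seq 'rV[R]_d)
  : Prop :=
  forall i j, E i j -> forall p p', p \in P i -> p' \in P j -> enorm (p - p') = 1.

Definition realisable (d k : nat) (E : rel 'I_k) (lam : 'I_k -> nat) : Prop :=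
  exists P : 'I_k -> seq 'rV[R]_d,
    [/\ forall i, uniq (P i), is_profile P lam & compatible E P].

Definition lp_feasible (k : nat) (E : rel 'I_k) (lam : 'I_k -> nat)
  (x : 'I_k -> R) : Prop :=
  forall i : 'I_k, 0 <= x i /\
    1 <= (lam i)%:R * x i + \sum_(j < k | (j != i) && ~~ E i j) x j.

Definition lp_obj (k : nat) (lam : 'I_k -> nat) (x : 'I_k -> R) : R :=
  \sum_(i < k) (lam i)%:R * x i.

Definition zeta (k : nat) (E : rel 'I_k) (lam : 'I_k -> nat) : R :=
  inf [set lp_obj lam x | x in lp_feasible E lam].

End Defs.

(* cycles and girth of a simple graph given by a symmetric irreflexive relation *)
Definition is_graph_cycle (k : nat) (E : rel 'I_k) (s : seq 'I_k) : Prop :=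
  ucycle E s /\ (3 <= size s)%N.

Definition has_girth (k : nat) (E : rel 'I_k) (g : nat) : Prop :=
  (exists s, is_graph_cycle E s /\ size s = g) /\
  (forall s, is_graph_cycle E s -> (g <= size s)%N).

(* A shortest cycle C of length g >= 5 has no chords and no vertex outside C has two
   neighbours on it, so the indicator of C scaled by 1/(g-1) is feasible and
   zeta <= (sum of lam_i over C) / (g-1).  The differences p - p_0 of the points of P_i,
   lying on a sphere of minimal dimension lam_i, span a space V_i of dimension at least
   lam_i, and unit distances between P_i and P_j make V_i orthogonal to V_j along every
   edge.  Around an even cycle of length 2l pairs of consecutive spaces give
   dim V_i + dim V_(i+1) <= d; around an odd cycle of length 2l+1, replacing V_0, V_1, V_2
   by V_0 /\ V_2 shows inductively that the dimensions sum to at most l d. *)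

From HB Require Import structures.
From mathcomp Require Import all_boot all_order all_algebra.
From mathcomp Require Import boolp classical_sets reals.
From mathcomp Require Import zify ring.
Import Order.TTheory GRing.Theory Num.Theory.
Local Open Scope ring_scope.
Set Implicit Arguments. Unset Strict Implicit.

Section Orthogonality.
Variables (F : fieldType) (d : nat).

Definition orthmx m n (A : 'M[F]_(m, d)) (B : 'M[F]_(n, d)) := A *m B^T = 0.

Lemma orthmx_sym m n (A : 'M_(m, d)) (B : 'M_(n, d)) : orthmx A B -> orthmx B A.
Proof. by rewrite /orthmx => AB; rewrite -[B]trmxK -trmx_mul AB trmx0. Qed.

Lemma orthmx_subl m m' n (A : 'M_(m, d)) (A' : 'M_(m', d)) (B : 'M_(n, d)) :
  (A' <= A)%MS -> orthmx A B -> orthmx A' B.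
Proof. by case/submxP=> X -> AB; rewrite /orthmx -mulmxA AB mulmx0. Qed.

Lemma orthmx_subr m n n' (A : 'M_(m, d)) (B : 'M_(n, d)) (B' : 'M_(n', d)) :
  (B' <= B)%MS -> orthmx A B -> orthmx A B'.
Proof. by move=> sB /orthmx_sym AB; apply/orthmx_sym/(orthmx_subl sB). Qed.

Lemma orthmx_genmx m n (A : 'M_(m, d)) (B : 'M_(n, d)) :
  orthmx A B -> orthmx <<A>>%MS <<B>>%MS.
Proof. by move=> AB; apply: (orthmx_subl _ (orthmx_subr _ AB)); rewrite genmxE. Qed.

Lemma orthmx_addsl m1 m2 n (A1 : 'M_(m1, d)) (A2 : 'M_(m2, d)) (B : 'M_(n, d)) :
  orthmx A1 B -> orthmx A2 B -> orthmx (A1 + A2)%MS B.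
Proof.
move=> A1B A2B; apply: (@orthmx_subl _ _ _ (col_mx A1 A2)); first by rewrite addsmxE.
by rewrite /orthmx mul_col_mx A1B A2B col_mx0.
Qed.

Lemma orthmx_rank m n (A : 'M_(m, d)) (B : 'M_(n, d)) :
  orthmx A B -> (\rank A + \rank B <= d)%N.
Proof.
move=> /orthmx_sym /sub_kermxP /mxrankS; rewrite mxrank_ker mxrank_tr.
by have := rank_leq_col A; lia.
Qed.

Lemma orthmx_rank_cap m n p (A : 'M_(m, d)) (B : 'M_(n, d)) (C : 'M_(p, d)) :
  orthmx A B -> orthmx C B -> (\rank A + \rank B + \rank C <= d + \rank (A :&: C))%N.
Proof.
move=> AB CB; have := orthmx_rank (orthmx_addsl AB CB).
by have := mxrank_sum_cap A C; lia.
Qed.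

End Orthogonality.

Section OrthogonalCycles.
Variable R : realFieldType.

Lemma orthmx_self_eq0 d m (A : 'M[R]_(m, d)) : orthmx A A -> A = 0.
Proof.
move=> AA; apply/matrixP => i j; rewrite mxE.
have : (A *m A^T) i i = 0 by rewrite AA mxE.
rewrite mxE => /eqP; rewrite psumr_eq0 => [|t _]; last by rewrite mxE -expr2 sqr_ge0.
move=> /allP /(_ j (mem_index_enum _)) /implyP /(_ isT).
by rewrite mxE -expr2 sqrf_eq0 => /eqP.
Qed.

(* Merging [V 0] and [V 2] into their intersection shortens the odd cycle by two. *)
Lemma odd_cycle_orthmx_rank d l (V : nat -> 'M[R]_d) :
  (forall i, (i < 2 * l)%N -> orthmx (V i) (V i.+1)) -> orthmx (V (2 * l)%N) (V 0%N) ->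
  (\sum_(i < (2 * l).+1) \rank (V i) <= l * d)%N.
Proof.
elim: l V => [|l IHl] V orthV orthV0.
  by rewrite big_ord1 (orthmx_self_eq0 orthV0) mxrank0.
have -> : (2 * l.+1).+1 = (2 * l).+3 by lia.
pose W i := if i is i'.+1 then V i'.+3 else (V 0%N :&: V 2%N)%MS.
have orthW i : (i < 2 * l)%N -> orthmx (W i) (W i.+1).
  case: i => [|i] lti /=; last by apply: orthV; lia.
  by apply: orthmx_subl (capmxSr _ _) _; apply: orthV; lia.
have orthW0 : orthmx (W (2 * l)%N) (W 0%N).
  apply: orthmx_subr (capmxSl _ _) _; rewrite /W.
  case: l {IHl orthW W} orthV orthV0 => [|l] orthV /=; first exact: orthmx_subl (capmxSr _ _).
  by rewrite (_ : (2 * l.+1).+2 = 2 * l.+2)%N; last lia.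
have := IHl W orthW orthW0; rewrite !big_ord_recl.
under eq_bigr do rewrite !lift0; rewrite !lift0 /=.
have orthV01 : orthmx (V 0%N) (V 1%N) by apply: orthV; lia.
have orthV21 : orthmx (V 2%N) (V 1%N) by apply/orthmx_sym/orthV; lia.
have := orthmx_rank_cap orthV01 orthV21; lia.
Qed.

End OrthogonalCycles.

Lemma leq_sum_pairs (f : nat -> nat) (l d : nat) :
  (forall i, (i < l)%N -> (f (2 * i) + f (2 * i).+1 <= d)%N) ->
  (\sum_(m < 2 * l) f m <= l * d)%N.
Proof.
elim: l => [|l IHl] fd; first by rewrite big_ord0.
rewrite (_ : 2 * l.+1 = (2 * l).+2)%N; last lia.
rewrite !big_ord_recr /= mulSn -addnA addnC.
exact: leq_add (fd l (ltnSn l)) (IHl (fun i lti => fd i (ltnW lti))).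
Qed.

Section DifferenceSpaces.
Variables (R : realType) (d : nat).
Implicit Types (P Q : seq 'rV[R]_d) (c u v x y : 'rV[R]_d).

Lemma enorm_sqr v : enorm v ^+ 2 = \sum_(i < d) v 0 i ^+ 2.
Proof. by rewrite sqr_sqrtr // sumr_ge0 // => i _; rewrite sqr_ge0. Qed.

Lemma enorm0 : enorm (0 : 'rV[R]_d) = 0.
Proof. by rewrite /enorm big1 ?sqrtr0 // => i _; rewrite mxE expr0n. Qed.

(* Polarisation: the four unit distances cancel in [|x-u|^2 - |x-v|^2 - |y-u|^2 + |y-v|^2]. *)
Lemma unit_dist_orthmx x y u v :
  enorm (x - u) = 1 -> enorm (x - v) = 1 -> enorm (y - u) = 1 -> enorm (y - v) = 1 ->
  orthmx (x - y) (u - v).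
Proof.
have sqr1 (w : 'rV[R]_d) : enorm w = 1 -> \sum_(i < d) w 0 i ^+ 2 = 1.
  by move=> w1; rewrite -enorm_sqr w1 expr1n.
move=> /sqr1 xu /sqr1 xv /sqr1 yu /sqr1 yv; apply/matrixP => i j; rewrite !ord1 !mxE.
have : \sum_(t < d) ((x - u) 0 t ^+ 2 - (x - v) 0 t ^+ 2 - (y - u) 0 t ^+ 2
                     + (y - v) 0 t ^+ 2) = 0.
  by rewrite big_split /= !sumrB xu xv yu yv; ring.
rewrite (eq_bigr (fun t => -2 * ((x - y) 0 t * (u - v)^T t 0))) => [|t _]; last first.
  by rewrite !mxE; ring.
by rewrite -mulr_sumr => /eqP; rewrite mulf_eq0 oppr_eq0 pnatr_eq0 => /eqP.
Qed.

Definition diffmx P : 'M[R]_(size P, d) := \matrix_(a, j) (nth 0 P a - nth 0 P 0) 0 j.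

Lemma diffmx_sub P p : p \in P -> (p - nth 0 P 0 <= diffmx P)%MS.
Proof.
move=> pP; have ltp : (index p P < size P)%N by rewrite index_mem.
have -> : p - nth 0 P 0 = row (Ordinal ltp) (diffmx P).
  by apply/rowP => j; rewrite !mxE nth_index.
exact: row_sub.
Qed.

Lemma diffmx_orthmx P Q : (forall p q, p \in P -> q \in Q -> enorm (p - q) = 1) ->
  orthmx (diffmx P) (diffmx Q).
Proof.
move=> PQ1; apply/matrixP => a b; rewrite [RHS]mxE.
have inP (a' : 'I_(size P)) : nth 0 P a' \in P by apply: mem_nth.
have inQ (b' : 'I_(size Q)) : nth 0 Q b' \in Q by apply: mem_nth.
have P0 : nth 0 P 0 \in P by apply: mem_nth; case: (size P) a => [[]|].
have Q0 : nth 0 Q 0 \in Q by apply: mem_nth; case: (size Q) b => [[]|].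
have /matrixP/(_ 0 0) := unit_dist_orthmx (PQ1 _ _ (inP a) (inQ b)) (PQ1 _ _ (inP a) Q0)
                                           (PQ1 _ _ P0 (inQ b)) (PQ1 _ _ P0 Q0).
rewrite !mxE => dot0; rewrite -[RHS]dot0.
by apply: eq_bigr => t _; rewrite !mxE.
Qed.

(* [P] lies on the sphere of dimension [rank U - 1] cut out by [c + U], where [U] is
   spanned by the differences and by [p_0 - c]. *)
Lemma leq_rank_diffmx P l c r : P != [::] -> 0 < r ->
  (forall p, p \in P -> enorm (p - c) = r) ->
  (forall l', (l' < l)%N -> ~ in_sphere_dim P l') -> (l <= \rank (diffmx P))%N.
Proof.
move=> P0 r_gt0 onS minl; set p0 := nth 0 P 0.
have p0P : p0 \in P by apply: mem_nth; rewrite lt0n size_eq0.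
pose U := <<col_mx (diffmx P) (p0 - c)>>%MS.
have sDU : (diffmx P <= U)%MS by rewrite genmxE -addsmxE addsmxSl.
have sp0U : (p0 - c <= U)%MS by rewrite genmxE -addsmxE addsmxSr.
have rankU : (\rank U <= \rank (diffmx P) + 1)%N.
  rewrite genmxE -addsmxE; apply: leq_trans (mxrank_adds_leqif _ _) _.
  by rewrite leq_add2l rank_leq_row.
have U_gt0 : (0 < \rank U)%N.
  apply: leq_trans (mxrankS sp0U); rewrite lt0n mxrank_eq0; apply: contraTneq r_gt0.
  by rewrite -(onS _ p0P) => ->; rewrite enorm0 ltxx.
have : ~~ ((\rank U).-1 < l)%N.
  apply/negP => /minl; apply; exists c, U, r; split; rewrite ?prednK //.
  move=> p pP; split; last exact: onS.
  rewrite -(subrK p0 p) -addrA; apply: addmx_sub (sp0U).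
  exact: submx_trans (diffmx_sub pP) sDU.
by rewrite -leqNgt; lia.
Qed.

End DifferenceSpaces.

Section ShortestCycle.
Local Open Scope nat_scope.
Variables (k : nat) (E : rel 'I_k).
Hypotheses (Esym : symmetric E) (Eirr : irreflexive E).

Lemma mkseq_graph_cycle (f : nat -> 'I_k) n : 2 <= n ->
  (forall i, i < n -> E (f i) (f i.+1)) -> E (f n) (f 0) ->
  {in gtn n.+1 &, injective f} -> is_graph_cycle E (mkseq f n.+1).
Proof.
move=> n2 fE fEn /mkseq_uniqP f_uniq; split; last by rewrite size_mkseq.
rewrite /ucycle f_uniq andbT (cycle_path (f 0)) mkseqS last_rcons -mkseqS.
apply/(pathP (f 0)) => -[|i]; rewrite size_mkseq => lti //=.
by rewrite (nth_map 0) ?nth_iota ?size_iota // nth_mkseq ?add1n ?fE //; lia.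
Qed.

Variables (g : nat) (s : seq 'I_k) (x0 : 'I_k).
Hypotheses (g_ge5 : 5 <= g) (size_s : size s = g) (ucycle_s : ucycle E s).
Hypothesis g_min : forall s', is_graph_cycle E s' -> (g <= size s').

Definition cyc i := nth x0 s (i %% g).

Lemma mem_cyc i : cyc i \in s.
Proof. by rewrite /cyc mem_nth // size_s ltn_pmod //; lia. Qed.

Lemma eq_cyc i j : (cyc i == cyc j) = (i == j %[mod g]).
Proof.
have uniq_s : uniq s by case/andP: ucycle_s.
by rewrite /cyc nth_uniq // size_s ltn_pmod //; lia.
Qed.

Lemma cyc_mod i j : i = j %[mod g] -> cyc i = cyc j.
Proof. by move=> eq_ij; apply/eqP; rewrite eq_cyc eq_ij. Qed.

Lemma cyc_index j : j \in s -> cyc (index j s) = j /\ index j s < g.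
Proof.
move=> js; have lt_jg : index j s < g by rewrite -size_s index_mem.
by rewrite /cyc modn_small // nth_index.
Qed.

Lemma cyc_edge i : E (cyc i) (cyc i.+1).
Proof.
have g_gt0 : 0 < g by lia.
have := ucycle_s => /andP[+ _]; rewrite (cycle_path x0) => /(pathP x0) sE.
rewrite /cyc -addn1 -modnDml addn1.
have := ltn_pmod i g_gt0; case: (ltnP (i %% g).+1 g) => [lt_ig _ | ge_ig lt_ig].
  by rewrite (modn_small lt_ig); have := sE (i %% g).+1; rewrite size_s => /(_ lt_ig).
have -> : (i %% g).+1 = g by lia.
have -> : i %% g = g.-1 by lia.
by rewrite modnn -size_s nth_last; have := sE 0; rewrite size_s => /(_ g_gt0).
Qed.

Lemma cyc_arc_inj a : {in gtn g &, injective (fun i => cyc (a + i))}.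
Proof.
move=> i j lt_ig lt_jg /eqP; rewrite eq_cyc eqn_modDl !modn_small //; exact/eqP.
Qed.

Lemma cyc_no_chord a b : a < b -> b < g -> E (cyc a) (cyc b) ->
  b = a.+1 \/ (a = 0 /\ b = g.-1).
Proof.
move=> lt_ab lt_bg abE; case: (ltnP a.+1 b) => [lt_a1b|]; last by left; lia.
right; suff : g <= (b - a).+1 by lia.
have := g_min (@mkseq_graph_cycle (fun i => cyc (a + i)) (b - a) _ _ _ _).
rewrite size_mkseq; apply.
- lia.
- by move=> i _; rewrite addnS; apply: cyc_edge.
- by rewrite subnKC ?(ltnW lt_ab) // addn0 Esym.
- by move=> i j; rewrite !inE => lti ltj; apply: cyc_arc_inj; rewrite inE; lia.
Qed.

Lemma cyc_fan w a m : w \notin s -> 0 < m < g -> E w (cyc a) -> E w (cyc (a + m)) ->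
  g <= m.+2.
Proof.
move=> ws /andP[m_gt0 lt_mg] waE wamE.
have cyc_neq_w j : cyc j != w by apply: contraNneq ws => <-; apply: mem_cyc.
pose f i := if i is j.+1 then cyc (a + j) else w.
have := g_min (@mkseq_graph_cycle f m.+1 _ _ _ _); rewrite size_mkseq; apply.
- lia.
- by move=> [|i] _ //=; rewrite ?addn0 // addnS; apply: cyc_edge.
- by rewrite /= Esym.
- move=> [|i] [|j]; rewrite !inE //= => lti ltj.
  + by move=> /esym/eqP; rewrite (negPf (cyc_neq_w _)).
  + by move=> /eqP; rewrite (negPf (cyc_neq_w _)).
  + by move=> /cyc_arc_inj ->; rewrite // inE; lia.
Qed.

Lemma cyc_no_two_nbrs w a b : w \notin s -> a < b -> b < g ->
  E w (cyc a) -> E w (cyc b) -> False.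
Proof.
move=> ws lt_ab lt_bg waE wbE.
have : g <= (b - a).+2.
  by apply: (cyc_fan ws _ waE); [lia | rewrite subnKC // ltnW].
have : g <= (g - (b - a)).+2.
  apply: (cyc_fan (a := b) ws _ wbE); first lia.
  by rewrite (@cyc_mod _ a) // (_ : b + (g - (b - a)) = a + g) ?modnDr //; lia.
lia.
Qed.

Lemma cyc_nbr a b : a < g -> b < g -> E (cyc a) (cyc b) ->
  cyc b = cyc a.+1 \/ cyc b = cyc (a + g.-1).
Proof.
move=> lt_ag lt_bg abE; case: (ltngtP a b) => [lt_ab|lt_ba|eq_ab].
- case: (cyc_no_chord lt_ab lt_bg abE) => [-> | [-> ->]]; [by left | by right].
- rewrite Esym in abE; case: (cyc_no_chord lt_ba lt_ag abE) => [-> | [-> ->]].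
    by right; apply: cyc_mod; rewrite (_ : b.+1 + g.-1 = b + g) ?modnDr //; lia.
  by left; apply: cyc_mod; rewrite prednK ?modnn ?mod0n //; lia.
- by move: abE; rewrite eq_ab Eirr.
Qed.

Lemma big_cyc (F : 'I_k -> nat) : \sum_(j <- s) F j = \sum_(m < g) F (cyc m).
Proof.
by rewrite (big_nth x0) size_s big_mkord; apply: eq_bigr => m _; rewrite /cyc modn_small.
Qed.

Definition cyc_nbrs w := [set j | (j \in s) && E w j].

Lemma card_cyc_nbrs w : #|cyc_nbrs w| <= 1 + (w \in s).
Proof.
case: (boolP (w \in s)) => ws.
  have [wa lt_ag] := cyc_index ws; set a := index w s in wa lt_ag.
  have sub_nbrs : cyc_nbrs w \subset [set cyc a.+1; cyc (a + g.-1)].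
    apply/fintype.subsetP => j; rewrite !inE -wa => /andP[js ajE].
    have [jb lt_bg] := cyc_index js; rewrite -jb in ajE *.
    by case: (cyc_nbr lt_ag lt_bg ajE) => ->; rewrite eqxx ?orbT.
  by apply: leq_trans (subset_leq_card sub_nbrs) _; rewrite cards2; case: (_ != _).
case: (set_0Vmem (cyc_nbrs w)) => [-> | [j0 j0N]]; first by rewrite cards0.
rewrite addn0 -(cards1 j0); apply: subset_leq_card; apply/fintype.subsetP => j jN; rewrite inE.
move: j0N jN; rewrite !inE => /andP[j0s wj0E] /andP[js wjE].
have [cj0 lt_j0g] := cyc_index j0s; have [cj lt_jg] := cyc_index js.
rewrite -cj0 in wj0E; rewrite -cj in wjE; rewrite -cj -cj0.
case: (ltngtP (index j0 s) (index j s)) => [lt_j0j|lt_jj0|-> //].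
- by case: (cyc_no_two_nbrs ws lt_j0j lt_jg wj0E wjE).
- by case: (cyc_no_two_nbrs ws lt_jj0 lt_j0g wjE wj0E).
Qed.

Definition cyc_non_nbrs w := [set j | [&& j \in s, j != w & ~~ E w j]].

Lemma card_cyc_non_nbrs w : g <= #|cyc_non_nbrs w| + 1 + (w \in s).*2.
Proof.
have uniq_s : uniq s by case/andP: ucycle_s.
have card_s : #|[set j | j \in s]| = g by rewrite cardsE -size_s; apply/card_uniqP.
have : [set j | j \in s] :\ w \subset cyc_non_nbrs w :|: cyc_nbrs w.
  by apply/fintype.subsetP => j; rewrite !inE => /andP[-> ->] /=; case: (E w j).
move/subset_leq_card; rewrite cardsU.
have := cardsD1 w [set j | j \in s]; rewrite card_s inE.
have := card_cyc_nbrs w; case: (w \in s) => /=; lia.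
Qed.

End ShortestCycle.

Section LinearProgram.
Variables (R : realType) (k : nat) (E : rel 'I_k) (lam : 'I_k -> nat).

Lemma zeta_le_lp_obj x : lp_feasible E lam x -> zeta R E lam <= lp_obj lam x.
Proof.
move=> feas_x; apply: ge_inf; last by exists x.
exists 0 => _ [y feas_y <-]; apply: sumr_ge0 => i _.
by apply: mulr_ge0; [exact: ler0n | exact: (feas_y i).1].
Qed.

Hypotheses (Esym : symmetric E) (Eirr : irreflexive E) (lam_ge2 : forall i, (2 <= lam i)%N).
Variables (g : nat) (s : seq 'I_k).
Hypotheses (g_ge5 : (5 <= g)%N) (size_s : size s = g) (ucycle_s : ucycle E s).
Hypothesis g_min : forall s', is_graph_cycle E s' -> (g <= size s')%N.

(* The indicator of a shortest cycle, scaled by [1 / (g - 1)], is feasible: a cycle vertex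
   has exactly two neighbours on the cycle and any other vertex at most one. *)
Lemma zeta_le_shortest_cycle : zeta R E lam <= (\sum_(i <- s) lam i)%:R / (g.-1)%:R.
Proof.
have uniq_s : uniq s by case/andP: ucycle_s.
pose t : R := (g.-1)%:R^-1; pose x i := if i \in s then t else 0.
have t_ge0 : 0 <= t by rewrite invr_ge0 ler0n.
have gt1 : t * (g.-1)%:R = 1 by rewrite mulVf // pnatr_eq0; lia.
have feas_x : lp_feasible E lam x.
  move=> i; split; first by rewrite /x; case: ifP.
  have -> : \sum_(j < k | (j != i) && ~~ E i j) x j = #|cyc_non_nbrs E s i|%:R * t.
    rewrite big_mkcond (eq_bigr (fun j => if j \in cyc_non_nbrs E s i then t else 0)).
      by rewrite -big_mkcond sumr_const mulr_natl.
    by move=> j _; rewrite /x inE; case: (j \in s); case: (j != i); case: (E i j).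
  have := card_cyc_non_nbrs Esym Eirr i g_ge5 size_s ucycle_s g_min i.
  rewrite -[X in X <= _]gt1 mulrC /x; case: (i \in s) => /= card_i.
    by rewrite -mulrDl ler_wpM2r // -natrD ler_nat; have := lam_ge2 i; lia.
  by rewrite mulr0 add0r ler_wpM2r // ler_nat; lia.
apply: le_trans (zeta_le_lp_obj feas_x) _; rewrite /lp_obj.
rewrite (eq_bigr (fun i => if i \in s then (lam i)%:R * t else 0)); last first.
  by move=> i _; rewrite /x; case: ifP; rewrite ?mulr0.
by rewrite -big_mkcond -(big_uniq _ uniq_s) -mulr_suml -natr_sum.
Qed.

End LinearProgram.

Section Realisation.
Variables (R : realType) (d k : nat) (E : rel 'I_k) (lam : 'I_k -> nat).
Variable P : 'I_k -> seq 'rV[R]_d.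
Hypotheses (Esym : symmetric E) (Eirr : irreflexive E).
Hypotheses (prof : is_profile P lam) (comp : compatible E P).
Hypothesis lam_ge2 : forall i, (2 <= lam i)%N.

Lemma profile_size_gt3 i : (3 < size (P i))%N.
Proof.
have := prof i; case: ifP => [_ lam0 | /negbT]; last by rewrite -ltnNge.
by have := lam_ge2 i; rewrite lam0.
Qed.

(* When [lam i = d] the profile provides no sphere, but [P i] lies on the unit sphere
   around any point of a neighbouring set. *)
Lemma lam_le_rank_diffmx i j : E i j -> (lam i <= \rank (diffmx (P i)))%N.
Proof.
move=> ijE; have Pi_gt3 := profile_size_gt3 i; have Pj_gt3 := profile_size_gt3 j.
have := prof i; rewrite leqNgt Pi_gt3 /= => -[_ sphere_lam min_lam].
have [c [r [r_gt0 onS]]] : exists c r, 0 < r /\ forall p, p \in P i -> enorm (p - c) = r.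
  case: (ltnP (lam i) d) => [/sphere_lam [c [U [r [r_gt0 _ onS]]]] | _].
    by exists c, r; split => // p /onS [].
  exists (nth 0 (P j) 0%N), 1; split => // p pPi.
  by apply: comp ijE _ _ pPi _; apply: mem_nth; apply: leq_trans Pj_gt3.
apply: leq_rank_diffmx r_gt0 onS min_lam.
by rewrite -size_eq0 -lt0n; apply: leq_trans Pi_gt3.
Qed.

Lemma zeta_le_girth g n : (5 <= g)%N -> has_girth E g ->
  (forall V : nat -> 'M[R]_d, (forall i, orthmx (V i) (V i.+1)) -> V g = V 0%N ->
     (\sum_(i < g) \rank (V i) <= n)%N) ->
  zeta R E lam <= n%:R / (g.-1)%:R.
Proof.
move=> g_ge5 [[s [[ucycle_s _] size_s]] g_min] rank_le_n.
have x0 : 'I_k by case: s size_s {ucycle_s g_min} => [/= g0 | x _ _]; [exfalso; lia | exact: x].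
pose V i := <<diffmx (P (cyc g s x0 i))>>%MS.
have orthV i : orthmx (V i) (V i.+1).
  apply/orthmx_genmx/diffmx_orthmx => p q pP qP.
  exact: comp (cyc_edge x0 g_ge5 size_s ucycle_s i) _ _ pP qP.
have Vg : V g = V 0%N.
  by rewrite /V (@cyc_mod _ _ _ _ x0 g_ge5 size_s ucycle_s g 0) // modnn mod0n.
apply: le_trans (zeta_le_shortest_cycle R Esym Eirr lam_ge2 g_ge5 size_s ucycle_s g_min) _.
rewrite ler_wpM2r ?invr_ge0 ?ler0n // ler_nat (big_cyc x0 size_s).
apply: leq_trans (rank_le_n V orthV Vg); apply: leq_sum => m _; rewrite mxrank_gen.
exact: lam_le_rank_diffmx (cyc_edge x0 g_ge5 size_s ucycle_s m).
Qed.

End Realisation.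

Unset Implicit Arguments.
Set Strict Implicit.

Theorem theorem11p3 (R : realType) (d k : nat) (E : rel 'I_k) (lam : 'I_k -> nat) :
  symmetric E -> irreflexive E ->
  realisable R d E lam ->
  (forall i, (2 <= lam i)%N) ->
  (forall l : nat, (1 < l)%N -> has_girth E (2 * l + 1)%N ->
     zeta R E lam <= d%:R / 2) /\
  (forall l : nat, (2 < l)%N -> has_girth E (2 * l)%N ->
     zeta R E lam <= l%:R / (2 * l - 1)%N%:R * d%:R).
Proof.
move=> Esym Eirr [P [_ prof comp]] lam_ge2.
split=> l lt_l girth.
- apply: le_trans (zeta_le_girth Esym Eirr prof comp lam_ge2 (n := l * d) _ girth _) _.
  + lia.
  + move=> V orthV; rewrite addn1 => Vg.
    by apply: odd_cycle_orthmx_rank => [i _|]; rewrite -?Vg; apply: orthV.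
  + rewrite addn1 /= !natrM le_eqVlt; apply/orP; left; apply/eqP.
    by field; rewrite pnatr_eq0; lia.
- apply: le_trans (zeta_le_girth Esym Eirr prof comp lam_ge2 (n := l * d) _ girth _) _.
  + lia.
  + move=> V orthV _; apply: (@leq_sum_pairs (fun m => \rank (V m))) => i _.
    exact: orthmx_rank (orthV _).
  + by rewrite natrM mulrAC (_ : (2 * l).-1 = 2 * l - 1)%N //; lia.
Qed.
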